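(* Let $R$ be a finite Frobenius ring and let $R/\mathrm{rad}(R)\cong(\mathbb{F}_{q_1})^{m_1\times m_1}\times\cdots\times(\mathbb{F}_{q_t})^{m_t\times m_t}$ be its Wedderburn–Artin decomposition (prime powers $q_i$, positive integers $m_i$). Let $\omega$ be the normalized homogeneous weight on $R$. Then there exists $x\in R\setminus\{0\}$ with $\omega(x)=0$ if and only if $(q_i,m_i)=(2,1)$ for at least two indices $i\in\{1,\ldots,t\}$.
   Context: $\mathrm{rad}(R)$ is the Jacobson radical. The normalized homogeneous weight on a finite Frobenius ring $R$ is the unique map $\omega:R\to\mathbb{R}$ with $\omega(0)=0$, $\omega(x)=\omega(y)$ whenever $Rx=Ry$, and $\sum_{y\in Rx}\omega(y)=|Rx|$ for every $x\in R\setminus\{0\}$. *)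

From mathcomp Require Import all_boot all_order all_algebra.
From mathcomp Require Import reals.
Set Implicit Arguments. Unset Strict Implicit. Unset Printing Implicit Defensive.
Import GRing.Theory.
Local Open Scope ring_scope.

Section RingDefs.
Variable R : finNzRingType.

Definition is_lideal (I : {set R}) : bool :=
  [&& (0 : R) \in I, [forall x in I, forall y in I, x - y \in I]
    & [forall r : R, forall x in I, r * x \in I]].
Definition is_rideal (I : {set R}) : bool :=
  [&& (0 : R) \in I, [forall x in I, forall y in I, x - y \in I]
    & [forall r : R, forall x in I, x * r \in I]].

Definition is_max_lideal (I : {set R}) : bool :=
  [&& is_lideal I, I != setT &
      [forall J : {set R}, (is_lideal J && (I \proper J)) ==> (J == setT)]].

Definition jrad : {set R} := [set x | [forall I : {set R}, is_max_lideal I ==> (x \in I)]].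

Definition is_min_lideal (I : {set R}) : bool :=
  [&& is_lideal I, I != [set 0] &
      [forall J : {set R}, (is_lideal J && (J \proper I)) ==> (J == [set 0])]].
Definition is_min_rideal (I : {set R}) : bool :=
  [&& is_rideal I, I != [set 0] &
      [forall J : {set R}, (is_rideal J && (J \proper I)) ==> (J == [set 0])]].

(* socles: sum of all minimal left (resp. right) ideals, i.e. the smallest
   left (resp. right) ideal containing all of them *)
Definition soc_l : {set R} :=
  \bigcap_(J : {set R} | is_lideal J && [forall I : {set R}, is_min_lideal I ==> (I \subset J)]) J.
Definition soc_r : {set R} :=
  \bigcap_(J : {set R} | is_rideal J && [forall I : {set R}, is_min_rideal I ==> (I \subset J)]) J.

(* R is Frobenius: _R(R/rad R) ~= soc(_R R) and (R/rad R)_R ~= soc(R_R).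
   An isomorphism R/rad R ~= S of modules is given (first isomorphism theorem)
   by a module homomorphism f : R -> R with kernel rad R and image S. *)
Definition frobenius : Prop :=
  (exists f : R -> R,
     [/\ forall x y, f (x + y) = f x + f y,
         forall r x, f (r * x) = r * f x,
         forall x, (f x == 0) = (x \in jrad) &
         forall y, (y \in soc_l) <-> exists x, f x = y])
  /\
  (exists f : R -> R,
     [/\ forall x y, f (x + y) = f x + f y,
         forall r x, f (x * r) = f x * r,
         forall x, (f x == 0) = (x \in jrad) &
         forall y, (y \in soc_r) <-> exists x, f x = y]).

Definition lprinc (x : R) : {set R} := [set r * x | r : R].

Definition normalized_homogeneous_weight (K : realType) (w : R -> K) : Prop :=
  [/\ w 0 = 0,
      forall x y, lprinc x = lprinc y -> w x = w y &
      forall x, x != 0 -> \sum_(y in lprinc x) w y = (#|lprinc x|)%:R].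

(* Wedderburn-Artin decomposition R/rad R ~= prod_{i<t} M_{m i}(F i):
   a family of ring homomorphisms phi i : R -> M_{m i}(F i) whose product map
   is surjective with kernel rad R. *)
Definition wedderburn_artin (t : nat) (F : 'I_t -> finFieldType) (m : 'I_t -> nat)
  (phi : forall i, R -> 'M[F i]_(m i)) : Prop :=
  (forall i, (0 < m i)%N) /\
  [/\ forall i x y, phi i (x + y) = phi i x + phi i y,
      forall i x y, phi i (x * y) = phi i x *m phi i y,
      forall i, phi i 1 = 1%:M,
      (forall A : forall i, 'M[F i]_(m i), exists x, forall i, phi i x = A i) &
      forall x, (forall i, phi i x = 0) <-> x \in jrad].

End RingDefs.

(* A homogeneous weight is determined by its sum condition, by induction on
   [|Rx|]: the sum over [Rx] fixes [w] on the generators of [Rx] once [w] is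
   known on the smaller principal left ideals inside it.  So it suffices to
   exhibit the solution.  With [R/rad R = prod_i M_(m_i)(F_(q_i))] and
   [f : R/rad R ~= soc(_R R)], it is [w (f z) = 1 - prod_i c(q_i, m_i, rank z_i)]
   on the socle, where [c(q, m, r) = prod_(j < r) -1/(q^(m-j) - 1)] satisfies
   [sum_A c(q, m, rank (A Z)) = 0] for [Z != 0], and [w = 1] off the socle, using
   that the socle part of [Rx] is again principal as [R/rad R] is semisimple.
   Finally [|c| <= 1], with [|c| < 1] for [r > 0] unless [(q, m) = (2, 1)],
   where [c = -1]; so [w (f z) = 0] forces the nonzero blocks of [z] to be
   [1x1] over [F_2], and to be even and nonzero in number. *)

From mathcomp Require Import all_boot all_order all_algebra.
From mathcomp Require Import reals.
From mathcomp Require Import zify ring lra.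

Set Implicit Arguments. Unset Strict Implicit. Unset Printing Implicit Defensive.
Import Order.TTheory GRing.Theory Num.Theory.
Local Open Scope ring_scope.

Lemma expn_gt1 q k : (1 < q)%N -> (0 < k)%N -> (1 < q ^ k)%N.
Proof. by move=> q_gt1 k_gt0; rewrite -(expn0 q) ltn_exp2l. Qed.

Section WeightCoefficient.
Variable K : numFieldType.

(* [1 - wcoef q m r] is the homogeneous weight of a rank-[r] matrix in
   [M_m(F_q)]. *)
Definition wcoef (q m r : nat) : K := \prod_(j < r) - ((q ^ (m - j))%:R - 1)^-1.

Lemma wcoef0 q m : wcoef q m 0 = 1.
Proof. by rewrite /wcoef big_ord0. Qed.

Lemma wcoefS q m r : wcoef q m r.+1 = wcoef q m r * - ((q ^ (m - r))%:R - 1)^-1.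
Proof. by rewrite /wcoef big_ord_recr. Qed.

(* Of the [q^m] rows added to a matrix of rank [r < m], [q^r] keep the rank
   and the others raise it. *)
Lemma wcoef_balance q m r : (1 < q)%N -> (r < m)%N ->
  (q ^ r)%:R * wcoef q m r + ((q ^ m)%:R - (q ^ r)%:R) * wcoef q m r.+1 = 0.
Proof.
move=> q_gt1 lt_rm.
have -> : (q ^ m = q ^ r * q ^ (m - r))%N by rewrite -expnD subnKC // ltnW.
have : ((q ^ (m - r))%:R - 1 : K) != 0.
  by rewrite subr_eq0 pnatr_eq1 gtn_eqF // expn_gt1 // subn_gt0.
rewrite wcoefS natrM; move: (q ^ (m - r))%:R => b b1_neq0.
by field.
Qed.

End WeightCoefficient.

Section RankSums.
Variables (F : finFieldType) (K : numFieldType).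
Local Notation c := (@wcoef K #|F|).

Lemma rank_col_mx_row n m (v : 'rV[F]_m) (Y : 'M[F]_(n, m)) :
  \rank (col_mx v Y) = (\rank Y + ~~ (v <= Y)%MS)%N.
Proof.
rewrite -addsmxE; have [vY|vNY] := boolP (v <= Y)%MS.
  by rewrite addn0 (addsmx_idPr vY).
have : (Y < v + Y)%MS.
  by rewrite ltmxE addsmxSr; apply: contra vNY; apply: submx_trans; apply: addsmxSl.
rewrite ltmxErank => /andP [_ lt_rank].
have [le_rank _] := mxrank_adds_leqif v Y; rewrite rank_rV in le_rank.
move: le_rank lt_rank; case: (v != 0) => /=; lia.
Qed.

Lemma card_rV_submx n m (Y : 'M[F]_(n, m)) :
  #|[set v : 'rV[F]_m | (v <= Y)%MS]| = (#|F| ^ \rank Y)%N.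
Proof.
have -> : [set v : 'rV[F]_m | (v <= Y)%MS] = (mulmxr (row_base Y)) @: setT.
  apply/setP => v; rewrite inE -(eq_row_base Y); apply/submxP/imsetP.
    by case=> u ->; exists u.
  by case=> u _ ->; exists u.
by rewrite card_imset ?cardsT ?card_mx ?mul1n //; apply: row_free_inj; apply: row_base_free.
Qed.

Lemma sum_wcoef_rank_col_mx n m (Y : 'M[F]_(n, m)) : (\rank Y < m)%N ->
  \sum_(v : 'rV[F]_m) c m (\rank (col_mx v Y)) = 0.
Proof.
move=> lt_rank_m; set r := \rank Y.
transitivity (\sum_(v : 'rV[F]_m)
    (c m r.+1 + (if v \in [set v | (v <= Y)%MS] then c m r - c m r.+1 else 0))).
  apply: eq_bigr => v _; rewrite rank_col_mx_row inE.
  by case: (v <= Y)%MS; rewrite ?addn0 ?addn1 ?addr0 // addrC subrK.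
rewrite big_split /= -big_mkcond !sumr_const card_rV_submx (@eq_cardT _ xpredT) //.
rewrite -cardT (@card_mx F 1 m) mul1n -/r.
rewrite -[_ *+ (_ ^ m)%N]mulr_natl -[_ *+ (_ ^ r)%N]mulr_natl.
rewrite -[RHS](wcoef_balance K (card_finNzRing_gt1 F) lt_rank_m); ring.
Qed.

Lemma sum_wcoef_rank d m : (0 < d)%N -> (d <= m)%N ->
  \sum_(Y : 'M[F]_(d, m)) c m (\rank Y) = 0.
Proof.
case: d => // d _ le_dm.
rewrite (reindex (fun p : 'rV[F]_m * 'M[F]_(d, m) => col_mx p.1 p.2 : 'M_(1 + d, m))) /=.
  rewrite -(pair_big xpredT xpredT (fun v Y => c m (\rank (col_mx v Y)))) /=.
  rewrite exchange_big big1 // => Y _; apply: sum_wcoef_rank_col_mx.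
  exact: leq_ltn_trans (rank_leq_row Y) le_dm.
exists (fun Y : 'M[F]_(1 + d, m) => (usubmx Y, dsubmx Y)) => [[v Y] _ | Y _] /=.
  by rewrite col_mxKu col_mxKd.
by rewrite vsubmxK.
Qed.

Lemma sum_wcoef_rank_mulmx m (Z : 'M[F]_m) : Z != 0 ->
  \sum_(A : 'M[F]_m) c m (\rank (A *m Z)) = 0.
Proof.
move=> Z_neq0; set B := col_base Z.
have rankB A : \rank (A *m Z) = \rank (A *m B).
  by rewrite -{1}(mulmx_base Z) mulmxA mxrankMfree // row_base_free.
under eq_bigr do rewrite rankB.
set S := \sum_A _.
have [L BL] := row_fullP (col_base_full Z).
have S_shift (Y : 'M[F]_(m, \rank Z)) : S = \sum_(A : 'M[F]_m) c m (\rank (A *m B + Y)%R).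
  rewrite /S (reindex_inj (addIr (Y *m L))) /=; apply: eq_bigr => A _.
  by rewrite /B mulmxDl -mulmxA BL mulmx1.
have sumY : \sum_(Y : 'M[F]_(m, \rank Z)) c m (\rank Y) = 0.
  rewrite (reindex (@trmx F (\rank Z) m)) /=; last first.
    by exists (@trmx F m (\rank Z)) => X _; rewrite trmxK.
  under eq_bigr do rewrite mxrank_tr.
  by apply: sum_wcoef_rank; rewrite ?lt0n ?mxrank_eq0 ?rank_leq_row.
have : \sum_(Y : 'M[F]_(m, \rank Z)) S = 0.
  rewrite (eq_bigr _ (fun Y _ => S_shift Y)) exchange_big big1 // => A _.
  rewrite (reindex_inj (addrI (- (A *m B)))) /=.
  by under eq_bigr do rewrite addNKr.
rewrite sumr_const (@eq_cardT _ xpredT) // -cardT card_mx -mulr_natl => /eqP.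
have F_neq0 : #|F| != 0%N by rewrite gtn_eqF // ltnW // card_finNzRing_gt1.
by rewrite mulf_eq0 pnatr_eq0 expn_eq0 (negbTE F_neq0) => /eqP.
Qed.

End RankSums.

Section WeightCoefficientNorm.
Variable K : realType.

Lemma norm_wcoef_factor_le1 q m j : (1 < q)%N -> (j < m)%N ->
  0 <= `|- (((q ^ (m - j))%:R : K) - 1)^-1| <= 1.
Proof.
move=> q_gt1 lt_jm; rewrite normr_ge0 normrN normfV.
have : (2 : K) <= (q ^ (m - j))%:R by rewrite (ler_nat K 2) expn_gt1 // subn_gt0.
by move=> ge2; rewrite ger0_norm ?invf_le1; lra.
Qed.

Lemma norm_wcoef_le1 q m r : (1 < q)%N -> (r <= m)%N -> `|wcoef K q m r| <= 1.
Proof.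
move=> q_gt1 le_rm; rewrite normr_prod prodr_ile1 // => j _.
by rewrite norm_wcoef_factor_le1 // (leq_trans (ltn_ord j)).
Qed.

(* Unless [(q, m) = (2, 1)], the first factor [-1/(q^m - 1)] has norm [< 1]. *)
Lemma norm_wcoef_lt1 q m r : (1 < q)%N -> (0 < r <= m)%N ->
  ~~ ((q == 2) && (m == 1))%N -> `|wcoef K q m r| < 1.
Proof.
case: r => // r q_gt1 /= le_rm not21; rewrite /wcoef big_ord_recl normrM.
have ge3 : (3 : K) <= (q ^ (m - 0))%:R.
  rewrite (ler_nat K 3) subn0; case: m le_rm not21 => // [[|m]] _ not21.
    by rewrite expn1; move: not21 q_gt1; case: q => [|[|[|q]]].
  by rewrite expnS; have := expn_gt1 q_gt1 (ltn0Sn m); nia.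
have lt1 : `|- (((q ^ (m - 0))%:R : K) - 1)^-1| < 1.
  by rewrite normrN normfV ger0_norm ?invf_lt1; lra.
have le1 : `|\prod_(j < r) - (((q ^ (m - bump 0 j))%:R : K) - 1)^-1| <= 1.
  rewrite normr_prod prodr_ile1 // => j _; apply: norm_wcoef_factor_le1 => //.
  by have := ltn_ord j; rewrite /bump /=; lia.
move: lt1 le1; set a := `|_ : K|; set b := `|_ : K|.
have [a_ge0 b_ge0] : 0 <= a /\ 0 <= b by rewrite /a /b !normr_ge0.
nra.
Qed.

Lemma wcoef_2_1_1 : wcoef K 2 1 1 = -1.
Proof. by rewrite /wcoef big_ord1 subn0 expn1 (_ : 2%:R - 1 = 1 :> K) ?invr1 //; lra. Qed.

Section Product.
Variables (t : nat) (q m r : 'I_t -> nat).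
Hypotheses (q_gt1 : forall i, (1 < q i)%N) (le_rm : forall i, (r i <= m i)%N).
Hypothesis prod_eq1 : \prod_i wcoef K (q i) (m i) (r i) = 1.

Lemma prod_wcoef_eq1_support i : r i != 0%N -> [/\ q i = 2, m i = 1 & r i = 1]%N.
Proof.
move=> ri_neq0.
have /andP [/eqP qi2 /eqP mi1] : (q i == 2) && (m i == 1).
  apply: contraT => not21.
  have ri_range : (0 < r i <= m i)%N by rewrite lt0n ri_neq0 le_rm.
  have lt1 := norm_wcoef_lt1 (q_gt1 i) ri_range not21.
  have : `|\prod_j wcoef K (q j) (m j) (r j)| < 1.
    rewrite (bigD1 i) //= normrM.
    have : `|\prod_(j | j != i) wcoef K (q j) (m j) (r j)| <= 1.
      by rewrite normr_prod prodr_ile1 // => j _; rewrite normr_ge0 norm_wcoef_le1.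
    move: lt1; set a := `|_ : K|; set b := `|_ : K|.
    have [a_ge0 b_ge0] : 0 <= a /\ 0 <= b by rewrite /a /b !normr_ge0.
    nra.
  by rewrite prod_eq1 normr1 ltxx.
by split=> //; have := le_rm i; rewrite mi1; move: ri_neq0; case: (r i) => [|[]].
Qed.

Lemma prod_wcoef_eq1_count : (exists j, r j != 0)%N ->
  (2 <= #|[set i | (q i == 2) && (m i == 1)]|)%N.
Proof.
move=> [j rj_neq0]; set T := [set i | r i != 0%N].
have : \prod_i wcoef K (q i) (m i) (r i) = (-1) ^+ #|T|.
  rewrite (bigID (mem T)) /= [X in _ * X]big1 ?mulr1 -?prodr_const; last first.
    by move=> i; rewrite inE negbK => /eqP ->; rewrite wcoef0.
  apply: eq_bigr => i; rewrite inE => /prod_wcoef_eq1_support [-> -> ->].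
  exact: wcoef_2_1_1.
rewrite prod_eq1 -signr_odd; have [odd_T|even_T] := boolP (odd #|T|).
  by move=> /= ?; lra.
have : (0 < #|T|)%N by apply/card_gt0P; exists j; rewrite inE.
move=> T_gt0 _; apply: leq_trans (subset_leq_card (_ : T \subset _)).
  by move: even_T T_gt0; case: #|T| => [|[|]].
apply/subsetP => i; rewrite !inE => /prod_wcoef_eq1_support [-> -> _].
by rewrite !eqxx.
Qed.

End Product.

End WeightCoefficientNorm.

Lemma morph_add0 (U V : zmodType) (g : U -> V) : {morph g : x y / x + y} -> g 0 = 0.
Proof. by move=> gD; apply: (addrI (g 0)); rewrite -gD !addr0. Qed.

Lemma morph_addB (U V : zmodType) (g : U -> V) :
  {morph g : x y / x + y} -> {morph g : x y / x - y}.
Proof. by move=> gD x y; apply: (addIr (g y)); rewrite -gD !subrK. Qed.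

Section PrincipalLeftIdeals.
Variable R : finNzRingType.
Implicit Types (x y u : R) (L : {set R}).

Lemma lprincP y u : reflect (exists r, u = r * y) (u \in lprinc y).
Proof. by apply: (iffP imsetP) => [[r _ ->]|[r ->]]; exists r. Qed.

Lemma lprinc_id y : y \in lprinc y.
Proof. by apply/lprincP; exists 1; rewrite mul1r. Qed.

Lemma lprinc_subset y u : u \in lprinc y -> lprinc u \subset lprinc y.
Proof.
move=> /lprincP [r ->]; apply/subsetP => v /lprincP [s ->].
by apply/lprincP; exists (s * r); rewrite mulrA.
Qed.

Lemma card_lprinc_lt y u : u \in lprinc y -> lprinc u != lprinc y ->
  (#|lprinc u| < #|lprinc y|)%N.
Proof. by move=> uy neq_uy; rewrite proper_card // properEneq neq_uy lprinc_subset. Qed.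

Lemma lidealP L :
  reflect [/\ 0 \in L, forall x y, x \in L -> y \in L -> x - y \in L
            & forall r x, x \in L -> r * x \in L] (is_lideal L).
Proof.
apply: (iffP and3P) => [[L0 /forall_inP LB /forallP LM] | [L0 LB LM]]; split=> //.
- by move=> x y xL yL; exact: (forall_inP (LB x xL) y yL).
- by move=> r x xL; exact: (forall_inP (LM r) x xL).
- by apply/forall_inP => x xL; apply/forall_inP => y yL; exact: LB.
- by apply/forallP => r; apply/forall_inP => x xL; exact: LM.
Qed.

Lemma lidealD L x y : is_lideal L -> x \in L -> y \in L -> x + y \in L.
Proof.
move=> /lidealP [L0 LB _] xL yL.
by rewrite -[y]opprK -[- y]sub0r; apply: (LB) => //; apply: LB.
Qed.

Lemma lideal_lprinc y : is_lideal (lprinc y).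
Proof.
apply/lidealP; split.
- by apply/lprincP; exists 0; rewrite mul0r.
- move=> _ _ /lprincP [a ->] /lprincP [b ->].
  by apply/lprincP; exists (a - b); rewrite mulrBl.
- move=> r _ /lprincP [a ->].
  by apply/lprincP; exists (r * a); rewrite mulrA.
Qed.

Lemma min_lideal_sub_soc_l L : is_min_lideal L -> L \subset soc_l R.
Proof. by move=> Lmin; apply/bigcapsP => J /andP [_ /forall_inP]; apply. Qed.

Lemma lprinc_meets_soc_l y : y != 0 ->
  exists2 u, u \in lprinc y :&: soc_l R & u != 0.
Proof.
move=> y_neq0; pose Q L := [&& is_lideal L, L != [set 0] & L \subset lprinc y].
have Qy : Q (lprinc y).
  rewrite /Q lideal_lprinc subxx andbT; apply: contra y_neq0 => /eqP y0.
  by have := lprinc_id y; rewrite y0 inE.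
have [L /and3P [L_lideal L_neq0 Ly] L_min] := arg_minnP (fun L => #|L|) Qy.
have L_soc : L \subset soc_l R.
  apply/min_lideal_sub_soc_l/and3P; split=> //; apply/forallP => J.
  apply/implyP => /andP [J_lideal JL]; apply: contraT => J_neq0.
  have /L_min : Q J by rewrite /Q J_lideal J_neq0 (subset_trans (proper_sub JL)).
  by rewrite leqNgt proper_card.
have [u uL u_neq0] : exists2 u, u \in L & u != 0.
  apply/exists_inP; apply: contraR L_neq0; rewrite negb_exists_in => /forall_inP L0.
  apply/eqP/setP => u; rewrite inE; apply/idP/eqP => [/L0|->]; first by rewrite negbK => /eqP.
  by case/lidealP: L_lideal.
by exists u; rewrite // inE (subsetP Ly) ?(subsetP L_soc).
Qed.

Lemma sum_lmul (V : zmodType) (h : R -> V) y :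
  \sum_(r : R) h (r * y) = (\sum_(u in lprinc y) h u) *+ #|[set r : R | r * y == 0]|.
Proof.
rewrite (partition_big (fun r => r * y) (mem (lprinc y))) /=; last first.
  by move=> r _; apply/lprincP; exists r.
rewrite -sumrMnl; apply: eq_bigr => u /lprincP [r0 ->].
rewrite (eq_bigr (fun _ => h (r0 * y))); last by move=> r /eqP ->.
rewrite sumr_const; congr (_ *+ _); rewrite -[RHS](card_imset _ (addIr r0)).
apply: eq_card => r.
apply/idP/imsetP => [/eqP ry | [s]].
  by exists (r - r0); rewrite ?inE ?mulrBl ?ry ?subrr ?subrK.
by rewrite inE => /eqP sy ->; rewrite unfold_in; apply/eqP; rewrite mulrDl sy add0r.
Qed.

Lemma lprinc_generator_eq0 (K : numDomainType) (g : R -> K) y :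
  \sum_(u in lprinc y) g u = 0 ->
  (forall u, u \in lprinc y -> lprinc u = lprinc y -> g u = g y) ->
  (forall u, u \in lprinc y -> lprinc u != lprinc y -> g u = 0) ->
  g y = 0.
Proof.
move=> sum_g gen_g nongen_g.
move: sum_g; rewrite (bigID (fun u => lprinc u == lprinc y)) /=.
rewrite [X in _ + X]big1 ?addr0; last by move=> u /andP []; apply: nongen_g.
rewrite (eq_bigr (fun _ => g y)) ?sumr_const; last by move=> u /andP [uy /eqP]; apply: gen_g.
move/eqP; rewrite mulrn_eq0 => /orP [|/eqP //].
by move/eqP/card0_eq/(_ y); rewrite unfold_in /= lprinc_id eqxx.
Qed.

End PrincipalLeftIdeals.

Section FrobeniusWeight.
Variables (R : finNzRingType) (K : realType) (t : nat) (F : 'I_t -> finFieldType).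
Variables (m : 'I_t -> nat) (phi : forall i, R -> 'M[F i]_(m i)) (f : R -> R).
Hypotheses (phiD : forall i, {morph phi i : x y / x + y})
  (phiM : forall i x y, phi i (x * y) = phi i x *m phi i y)
  (phi_surj : forall A : forall i, 'M[F i]_(m i), exists x, forall i, phi i x = A i)
  (phi_ker : forall x, (forall i, phi i x = 0) <-> x \in jrad R).
Hypotheses (fD : {morph f : x y / x + y}) (fM : forall r x, f (r * x) = r * f x)
  (f_ker : forall x, (f x == 0) = (x \in jrad R)).

Lemma f_eq_phi x y : f x = f y <-> forall i, phi i x = phi i y.
Proof.
have eq_phiB i : (phi i x == phi i y) = (phi i (x - y) == 0).
  by rewrite (morph_addB (phiD i)) subr_eq0.
split=> [/eqP | eq_xy].
  rewrite -subr_eq0 -(morph_addB fD) f_ker => /phi_ker phi0 i.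
  by apply/eqP; rewrite eq_phiB phi0.
apply/eqP; rewrite -subr_eq0 -(morph_addB fD) f_ker; apply/phi_ker => i.
by apply/eqP; rewrite -eq_phiB eq_xy.
Qed.

Lemma phi_block j (A : 'M[F j]_(m j)) :
  exists s, phi j s = A /\ forall i, i != j -> phi i s = 0.
Proof.
have [s phi_s] := phi_surj (dfwith (fun i => 0) A).
by exists s; split=> [|i ij]; rewrite phi_s ?dfwith_in // dfwith_out // eq_sym.
Qed.

Definition wprod (z : R) : K := \prod_i wcoef K #|F i| (m i) (\rank (phi i z)).

Lemma wprod_jrad z : z \in jrad R -> wprod z = 1.
Proof. by move=> /phi_ker phi_z0; rewrite /wprod big1 // => i _; rewrite phi_z0 mxrank0 wcoef0. Qed.

Lemma wprod_lprinc z z' : lprinc (f z') = lprinc (f z) -> wprod z' = wprod z.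
Proof.
have rank_le a b : lprinc (f a) = lprinc (f b) -> forall i, (\rank (phi i a) <= \rank (phi i b))%N.
  move=> eq_ab i; have := lprinc_id (f a); rewrite eq_ab => /lprincP [s].
  by rewrite -fM => /f_eq_phi /(_ i) ->; rewrite phiM mxrankM_maxr.
move=> eq_z'z; apply: eq_bigr => i _; congr wcoef.
by apply/eqP; rewrite eqn_leq !rank_le.
Qed.

(* Left multiplication by a lift of [A] shifts the [j]-th block by [A], so
   averaging over [A] reduces the sum to [sum_wcoef_rank_mulmx]. *)
Lemma sum_wprod_lmul z : z \notin jrad R -> \sum_(r : R) wprod (r * z) = 0.
Proof.
move=> z_notin_jrad.
have [j phi_j_neq0] : exists j, phi j z != 0.
  apply/existsP; apply: contraR z_notin_jrad; rewrite negb_exists => /forallP phi_z0.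
  by apply/phi_ker => i; apply/eqP; rewrite -[_ == _]negbK.
pose g (A : 'M[F j]_(m j)) := wcoef K #|F j| (m j) (\rank (A *m phi j z)).
pose G r := \prod_(i | i != j) wcoef K #|F i| (m i) (\rank (phi i (r * z))).
have wprod_split r : wprod (r * z) = g (phi j r) * G r by rewrite /wprod (bigD1 j) //= phiM.
under eq_bigr do rewrite wprod_split.
set S := \sum_r _.
have S_shift A : S = \sum_(r : R) g (phi j r + A) * G r.
  have [s [phi_js phi_is]] := phi_block A.
  rewrite /S (reindex_inj (addIr s)) /=; apply: eq_bigr => r _.
  rewrite phiD phi_js; congr (_ * _); apply: eq_bigr => i ij.
  by rewrite mulrDl phiD (phiM i s) phi_is // mul0mx addr0.
have : \sum_(A : 'M[F j]_(m j)) S = 0.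
  rewrite (eq_bigr _ (fun A _ => S_shift A)) exchange_big big1 // => r _.
  rewrite -mulr_suml (reindex_inj (addrI (- phi j r))) /=.
  by under eq_bigr do rewrite addNKr; rewrite sum_wcoef_rank_mulmx ?mul0r.
rewrite sumr_const => /eqP; rewrite mulrn_eq0 => /orP [|/eqP //].
by move/eqP/card0_eq/(_ (0 : 'M[F j]_(m j))).
Qed.

(* The value of [wprod] at any preimage of [y] under [f]; junk off the image. *)
Definition socle_wprod (y : R) : K := wprod (odflt 0 [pick z | f z == y]).

Lemma socle_wprod_f z : socle_wprod (f z) = wprod z.
Proof.
rewrite /socle_wprod; case: pickP => [z' /eqP /f_eq_phi eq_z'z | /(_ z)]; last by rewrite eqxx.
by apply: eq_bigr => i _; rewrite eq_z'z.
Qed.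

Lemma sum_socle_wprod z : f z != 0 -> \sum_(u in lprinc (f z)) socle_wprod u = 0.
Proof.
move=> fz_neq0; have := sum_lmul socle_wprod (f z).
rewrite (eq_bigr (fun r => wprod (r * z))); last by move=> r _; rewrite -fM socle_wprod_f.
rewrite sum_wprod_lmul -?f_ker // => /esym/eqP; rewrite mulrn_eq0 => /orP [|/eqP //].
by move/eqP/card0_eq/(_ 0); rewrite inE mul0r eqxx.
Qed.

(* [R / rad R] is semisimple, so every left ideal is principal modulo the
   radical: block by block, take a generator of the row space spanned by the
   images of [L]. *)
Lemma lideal_principal_mod_jrad (L : {set R}) : is_lideal L ->
  exists2 z0, z0 \in L & forall z, z \in L -> exists r, forall i, phi i z = phi i (r * z0).
Proof.
move=> L_lideal; have /lidealP [L0 _ LM] := L_lideal.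
have L_sum (I : finType) (P : pred I) (G : I -> R) :
    (forall k, P k -> G k \in L) -> \sum_(k | P k) G k \in L.
  by move=> GL; apply: (big_ind (fun x => x \in L)) => // x y; apply: lidealD.
have phi_sum i (I : finType) (P : pred I) (G : I -> R) :
    phi i (\sum_(k | P k) G k) = \sum_(k | P k) phi i (G k).
  exact: (big_morph (phi i) (phiD i) (morph_add0 (phiD i))).
pose V i := (\sum_(z in L) phi i z)%MS.
have [l lL phi_l] : exists2 l : 'I_t -> R, forall i, l i \in L & forall i, phi i (l i) = V i.
  apply: (@fin_all_exists2 _ (fun=> R) (fun _ l => l \in L) (fun i l => phi i l = V i)) => i.
  have [u_ Vu] := sub_sumsmxP (submx_refl (V i)).
  have [s s_u] := fin_all_exists (fun z => phi_block (u_ z)).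
  exists (\sum_(z in L) s z * z); first by apply: L_sum => z zL; apply: LM.
  by rewrite Vu phi_sum; apply: eq_bigr => z _; rewrite phiM (proj1 (s_u z)).
have [e e_blk] := fin_all_exists (fun i => phi_block (1%:M : 'M[F i]_(m i))).
exists (\sum_i e i * l i) => [|z zL]; first by apply: L_sum => i _; apply: LM.
have phi_z0 j : phi j (\sum_i e i * l i) = V j.
  rewrite phi_sum (bigD1 j) //= big1 => [|i ij].
    by rewrite addr0 phiM (proj1 (e_blk j)) mul1mx phi_l.
  by rewrite phiM (proj2 (e_blk i)) ?mul0mx // eq_sym.
have [X phi_zX] : exists X : forall i, 'M[F i]_(m i), forall i, phi i z = X i *m V i.
  apply: (@fin_all_exists _ _ (fun i X => phi i z = X *m V i)) => i.
  by apply/submxP; apply: (sumsmx_sup z).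
have [r phi_r] := phi_surj X.
by exists r => i; rewrite phiM phi_r phi_z0 phi_zX.
Qed.

Lemma lideal_preim_f (L : {set R}) : is_lideal L -> is_lideal [set z | f z \in L].
Proof.
move=> /lidealP [L0 LB LM]; apply/lidealP; split=> [|x y|r x]; rewrite !inE.
- by rewrite (morph_add0 fD).
- by rewrite (morph_addB fD); apply: LB.
- by rewrite fM; apply: LM.
Qed.

Hypothesis f_soc : forall y, y \in soc_l R <-> exists x, f x = y.

Lemma lprinc_soc_l y : y != 0 -> exists2 s, s != 0 & lprinc y :&: soc_l R = lprinc s.
Proof.
move=> y_neq0; have L_lideal := lideal_preim_f (lideal_lprinc y).
have [z0 z0L z0_gen] := lideal_principal_mod_jrad L_lideal.
rewrite inE in z0L.
have soc_gen : lprinc y :&: soc_l R = lprinc (f z0).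
  apply/setP => u; rewrite inE; apply/andP/lprincP => [[uy /f_soc [z fz]] | [r ->]].
    have [r /f_eq_phi] : exists r, forall i, phi i z = phi i (r * z0).
      by apply: z0_gen; rewrite inE fz.
    by rewrite fM fz; exists r.
  split; last by apply/f_soc; exists (r * z0); rewrite fM.
  by case/lidealP: (lideal_lprinc y) => _ _; apply.
exists (f z0) => //; apply/eqP => fz0.
have [u] := lprinc_meets_soc_l y_neq0.
by rewrite soc_gen fz0 => /lprincP [r ->]; rewrite mulr0 eqxx.
Qed.

Variable w : R -> K.
Hypotheses (w0 : w 0 = 0) (w_lprinc : forall x y, lprinc x = lprinc y -> w x = w y)
  (w_sum : forall x, x != 0 -> \sum_(y in lprinc x) w y = (#|lprinc x|)%:R).

Lemma sum_weight_sub1 y : y != 0 -> \sum_(u in lprinc y) (w u - 1) = 0.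
Proof. by move=> y_neq0; rewrite big_split /= w_sum // sumrN sumr_const subrr. Qed.

Lemma weight_f z : w (f z) = 1 - wprod z.
Proof.
have [n] := ubnP #|lprinc (f z)|; elim: n z => // n IH z lt_card.
have [fz0|fz_neq0] := eqVneq (f z) 0.
  by rewrite fz0 w0 wprod_jrad ?subrr // -f_ker fz0.
pose g u := w u - (1 - socle_wprod u).
suff : g (f z) = 0 by move/eqP; rewrite subr_eq0 socle_wprod_f => /eqP.
apply: lprinc_generator_eq0.
- under eq_bigr do rewrite /g opprB addrA addrAC.
  by rewrite big_split /= sum_weight_sub1 // sum_socle_wprod // add0r.
- move=> _ /lprincP [r ->] eq_rz; rewrite /g (w_lprinc eq_rz) -fM !socle_wprod_f.
  by rewrite (@wprod_lprinc z (r * z)) // fM.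
- move=> _ /[dup] /lprincP [r ->] rzP neq_rz; rewrite /g -fM IH ?socle_wprod_f ?subrr //.
  by rewrite fM (leq_trans (card_lprinc_lt rzP neq_rz)).
Qed.

Lemma weight_notin_soc_l y : y \notin soc_l R -> w y = 1.
Proof.
have [n] := ubnP #|lprinc y|; elim: n y => // n IH y lt_card y_notin_soc.
have y_neq0 : y != 0.
  by apply: contraNneq y_notin_soc => ->; apply/f_soc; exists 0; rewrite (morph_add0 fD).
have [s s_neq0 soc_gen] := lprinc_soc_l y_neq0.
pose g u := if u \in soc_l R then 0 else w u - 1.
suff : g y = 0 by rewrite /g (negbTE y_notin_soc) => /eqP; rewrite subr_eq0 => /eqP.
apply: lprinc_generator_eq0.
- rewrite (bigID (mem (soc_l R))) /= big1 ?add0r; last first.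
    by move=> u /andP [_ u_soc]; rewrite /g u_soc.
  rewrite (eq_bigr (fun u => w u - 1)); last first.
    by move=> u /andP [_ /negbTE u_notin_soc]; rewrite /g u_notin_soc.
  have := sum_weight_sub1 y_neq0; rewrite (bigID (mem (soc_l R))) /=.
  rewrite (eq_bigl (fun u => u \in lprinc s)) ?sum_weight_sub1 ?add0r // => u.
  by rewrite -soc_gen inE.
- move=> u uy eq_uy; rewrite /g (w_lprinc eq_uy) (negbTE y_notin_soc).
  case: ifP => // u_soc.
  have u_s : u \in lprinc s by rewrite -soc_gen inE uy u_soc.
  have : y \in lprinc s by rewrite (subsetP (lprinc_subset u_s)) // eq_uy lprinc_id.
  by rewrite -soc_gen inE (negbTE y_notin_soc) andbF.
- move=> u uy neq_uy; rewrite /g; case: ifPn => // u_notin_soc.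
  by rewrite IH ?subrr // (leq_trans (card_lprinc_lt uy neq_uy)).
Qed.

Lemma count_of_weight_eq0 x : x != 0 -> w x = 0 ->
  (2 <= #|[set i | (#|F i| == 2) && (m i == 1)]|)%N.
Proof.
move=> x_neq0 wx0; have x_soc : x \in soc_l R.
  by apply: contraT => /weight_notin_soc_l w1; move: wx0; rewrite w1 => /eqP; rewrite oner_eq0.
have [z fz] := (f_soc x).1 x_soc.
have wprod1 : wprod z = 1 by apply/eqP; rewrite eq_sym -subr_eq0 -weight_f fz wx0.
apply: (prod_wcoef_eq1_count _ _ wprod1) => [i | i | ].
- exact: card_finNzRing_gt1.
- exact: rank_leq_row.
apply/existsP; apply: contraR x_neq0; rewrite negb_exists -fz f_ker => /forallP rank0.
by apply/phi_ker => i; apply/eqP; rewrite -mxrank_eq0 -[_ == _]negbK; exact: rank0.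
Qed.

Lemma weight_eq0_of_count : (2 <= #|[set i | (#|F i| == 2) && (m i == 1)]|)%N ->
  exists x, x != 0 /\ w x = 0.
Proof.
move=> /card_gt1P [i [j [+ + neq_ij]]]; rewrite !inE.
move=> /andP [/eqP Fi2 /eqP mi1] /andP [/eqP Fj2 /eqP mj1].
have [si [phi_si si_blk]] := phi_block (1%:M : 'M[F i]_(m i)).
have [sj [phi_sj sj_blk]] := phi_block (1%:M : 'M[F j]_(m j)).
have neq_ji : j != i by rewrite eq_sym.
have phi_i : phi i (si + sj) = 1%:M by rewrite phiD phi_si (sj_blk i neq_ij) addr0.
have phi_j : phi j (si + sj) = 1%:M by rewrite phiD phi_sj (si_blk j neq_ji) add0r.
exists (f (si + sj)); split.
  rewrite f_ker; apply/negP => /phi_ker /(_ i); rewrite phi_i => /eqP.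
  by rewrite -mxrank_eq0 mxrank1 mi1.
rewrite weight_f /wprod (bigD1 i) // (bigD1 j) //= big1 => [|k /andP [ki kj]].
  by rewrite phi_i phi_j !mxrank1 Fi2 Fj2 mi1 mj1 wcoef_2_1_1 mulr1 mulrNN mulr1 subrr.
by rewrite phiD si_blk // sj_blk // addr0 mxrank0 wcoef0.
Qed.

End FrobeniusWeight.

Theorem corollary4p3 (R : finNzRingType) (K : realType)
  (t : nat) (F : 'I_t -> finFieldType) (m : 'I_t -> nat)
  (phi : forall i, R -> 'M[F i]_(m i)) (w : R -> K) :
  frobenius R ->
  wedderburn_artin phi ->
  normalized_homogeneous_weight w ->
  (exists x : R, x != 0 /\ w x = 0) <->
  (2 <= #|[set i : 'I_t | (#|F i| == 2) && (m i == 1)]|)%N.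
Proof.
move=> [[f [fD fM f_ker f_soc]] _] [_ [phiD phiM _ phi_surj phi_ker]] [w0 w_lprinc w_sum].
split=> [[x [x_neq0 wx0]] | count2].
  exact: (count_of_weight_eq0 phiD phiM phi_surj phi_ker fD fM f_ker f_soc
            w0 w_lprinc w_sum x_neq0 wx0).
exact: (weight_eq0_of_count phiD phiM phi_surj phi_ker fD fM f_ker w0 w_lprinc w_sum count2).
Qed.
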